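(* Let $m$ be an even integer with $m\ge 62$, and let $\beta(m)$ be the largest root of $Z(x)=x^3-x^2-(m-2)x+m-3$. Then $\sqrt{m-2}<\beta(m)<\sqrt{m-1.85}$. *)

From Stdlib Require Import Reals.
Open Scope R_scope.

Definition Zpoly (m : R) (x : R) : R := x ^ 3 - x ^ 2 - (m - 2) * x + m - 3.

Definition is_largest_root (m b : R) : Prop :=
  Zpoly m b = 0 /\ forall x : R, Zpoly m x = 0 -> x <= b.

From Stdlib Require Import Reals ZArith Lra Psatz.
Open Scope R_scope.

(* At a square root t of m - c the cubic collapses to the affine expression
   (2 - c) t + c - 3: it equals -1 at sqrt (m - 2) and is positive at
   sqrt (m - 1.85) as soon as t > 23/3, i.e. m > 60.6.  Beyond sqrt (m - 2)
   the cubic is strictly increasing, so the root produced by the intermediate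
   value theorem between these two points is its largest root. *)

Lemma Zpoly_at_sqr (m c t : R) : t * t = m - c ->
  Zpoly m t = (2 - c) * t + c - 3.
Proof.
  intros Ht. unfold Zpoly.
  replace (t ^ 3) with (t * (t * t)) by ring.
  replace (t ^ 2) with (t * t) by ring.
  rewrite Ht. ring.
Qed.

Lemma Zpoly_increasing_from_sqrt (m s x y : R) :
  s * s = m - 2 -> 1 < s -> s <= y -> y < x -> Zpoly m y < Zpoly m x.
Proof.
  intros Hs Hs1 Hsy Hyx.
  assert (Hdiff : Zpoly m x - Zpoly m y
                  = (x - y) * (x * x + x * y + y * y - x - y - (m - 2)))
    by (unfold Zpoly; ring).
  assert (Hfactor : 0 < x * x + x * y + y * y - x - y - (m - 2)).
  { assert (y * y - y >= s * s - s) by nra.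
    assert (x * x - x > s * s - s) by nra.
    assert (x * y >= s * s) by nra.
    nra. }
  assert (0 < (x - y) * (x * x + x * y + y * y - x - y - (m - 2)))
    by (apply Rmult_lt_0_compat; lra).
  lra.
Qed.

Lemma Zpoly_continuous (m : R) : continuity (Zpoly m).
Proof. unfold Zpoly. reg. Qed.

Lemma largest_root_between (f : R -> R) (a b : R) :
  continuity f -> a < b -> f a < 0 -> 0 < f b ->
  (forall x y, a <= y -> y < x -> f y < f x) ->
  exists r, a < r < b /\ f r = 0 /\ forall x, f x = 0 -> x <= r.
Proof.
  intros Hf Hab Ha Hb Hincr.
  destruct (IVT f a b Hf Hab Ha Hb) as [r [[Har Hrb] Hr]].
  assert (Har' : a < r) by (destruct Har as [H | H]; [exact H | subst; lra]).
  assert (Hrb' : r < b) by (destruct Hrb as [H | H]; [exact H | subst; lra]).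
  exists r. split; [lra | split; [exact Hr |]].
  intros x Hx. destruct (Rle_or_lt x r) as [H | H]; [exact H |].
  pose proof (Hincr x r ltac:(lra) H). lra.
Qed.

Theorem lemma2p4 (m : Z) (Heven : Z.Even m) (Hm : (62 <= m)%Z) :
  exists b : R, is_largest_root (IZR m) b /\
    sqrt (IZR m - 2) < b /\ b < sqrt (IZR m - 185 / 100).
Proof.
  apply IZR_le in Hm.
  set (M := IZR m) in *.
  set (s := sqrt (M - 2)). set (t := sqrt (M - 185 / 100)).
  assert (Hs2 : s * s = M - 2) by (apply sqrt_sqrt; lra).
  assert (Ht2 : t * t = M - 185 / 100) by (apply sqrt_sqrt; lra).
  assert (Hs0 : 0 <= s) by apply sqrt_pos.
  assert (Ht0 : 0 <= t) by apply sqrt_pos.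
  assert (Hs1 : 1 < s) by nra.
  assert (Ht : 23 / 3 < t) by nra.
  assert (Hst : s < t) by nra.
  assert (Zs : Zpoly M s < 0) by (rewrite (Zpoly_at_sqr M 2 s Hs2); lra).
  assert (Zt : 0 < Zpoly M t) by (rewrite (Zpoly_at_sqr M (185 / 100) t Ht2); lra).
  destruct (largest_root_between (Zpoly M) s t (Zpoly_continuous M) Hst Zs Zt
              (fun x y => Zpoly_increasing_from_sqrt M s x y Hs2 Hs1))
    as [b [Hb [Hroot Hlargest]]].
  exists b. split; [split |]; assumption.
Qed.
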